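(* Let $f(x)=x^5+px^4+qx^3+rx^2+sx+t$ with real coefficients, and suppose $D=0$ and $L_1>0$ (so that $f$ has one real double root and three distinct real simple roots). Then the double root of $f$ equals $d=C_0/L_1$. Put $F_1=q+4pd+10d^2$, $F_2=r+3qd+6pd^2+10d^3$, $F_3=pq+4p^2d-24pd^2-22qd-40d^3-9r$. Then, writing the roots in increasing order: (a) if $F_1>0$, $F_2<0$, $F_3<0$: double $<$ single $<$ single $<$ single; (b) if $F_1>0$, $F_2>0$, $F_3>0$: single $<$ single $<$ single $<$ double; (c) if $F_2>0$ and ($F_1\le0$ or $F_3\le 0$): single $<$ double $<$ single $<$ single; (d) if $F_2<0$ and ($F_1\le 0$ or $F_3\ge0$): single $<$ single $<$ double $<$ single.
   Context: Let $\alpha_1,\dots,\alpha_5\in\mathbb{C}$ be the roots of $f$ listed with multiplicity. $D=\prod_{1\le i<j\le 5}(\alpha_i-\alpha_j)^2$ is the discriminant of $f$. $L_1=-264ps^2r-12p^3tq^2+36r^3pq-124srpq^2+28srp^3q+260sptq-132p^2qrt+240pr^2t+234sqr^2+32p^4tr+48ptq^3-56sp^3t-80q^2rt+194qs^2p^2-600str-6q^3sp^2+2p^2q^2r^2-12sr^2p^2-54r^4+320s^3-8q^3r^2-8r^3p^3+250qt^2-176q^2s^2+24q^4s-36p^4s^2-100p^2t^2$. $C_0=48sp^4t+4sp^3r^2+80p^3t^2-32p^3rqt-3p^3s^2q+7s^2p^2r-p^2srq^2-4p^2r^2t+9p^2tq^3-266sqp^2t+16ps^3+146ptrq^2-18spr^2q+290sptr-275pqt^2+12ps^2q^2+4sq^3r-195r^2qt+260sq^2t+27sr^3+375t^2r-36q^4t-48rs^2q-400ts^2$.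 (Note $f(y+d)=y^2\,(y^3+(p+5d)y^2+F_1y+F_2)$, and $F_3=(p+5d)F_1-9F_2$.) *)

From HB Require Import structures.
From mathcomp Require Import all_boot all_order all_algebra all_field.
Set Implicit Arguments. Unset Strict Implicit. Unset Printing Implicit Defensive.
Import Order.TTheory GRing.Theory Num.Theory.
Local Open Scope ring_scope.

Section Quintic.
Variable C : numClosedFieldType.

Definition quintic (p q r s t : C) : {poly C} :=
  'X^5 + p *: 'X^4 + q *: 'X^3 + r *: 'X^2 + s *: 'X + t%:P.

Definition discr5 (alpha : 'I_5 -> C) : C :=
  \prod_(i < 5) \prod_(j < 5 | (i < j)%N) (alpha i - alpha j) ^+ 2.

Definition L1 (p q r s t : C) : C :=
  - 264%:R * p * s^+2 * r - 12%:R * p^+3 * t * q^+2 + 36%:R * r^+3 * p * q - 124%:R * s * r * p * q^+2 + 28%:R * s * r * p^+3 * q + 260%:R * s * p * t * q - 132%:R * p^+2 * q * r * t + 240%:R * p * r^+2 * t + 234%:R * s * q * r^+2 + 32%:R * p^+4 * t * r + 48%:R * p * t * q^+3 - 56%:R * s * p^+3 * t - 80%:R * q^+2 * r * t + 194%:R * q * s^+2 * p^+2 - 600%:R * s * t * r - 6%:R * q^+3 * s * p^+2 + 2%:R * p^+2 * q^+2 * r^+2 - 12%:R * s * r^+2 * p^+2 - 54%:R * r^+4 + 320%:R * s^+3 - 8%:R * q^+3 * r^+2 - 8%:R * r^+3 * p^+3 + 250%:R * q * t^+2 - 176%:R * q^+2 * s^+2 + 24%:R * q^+4 * s - 36%:R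 * p^+4 * s^+2 - 100%:R * p^+2 * t^+2.

Definition C0 (p q r s t : C) : C :=
  48%:R * s * p^+4 * t + 4%:R * s * p^+3 * r^+2 + 80%:R * p^+3 * t^+2 - 32%:R * p^+3 * r * q * t - 3%:R * p^+3 * s^+2 * q + 7%:R * s^+2 * p^+2 * r - p^+2 * s * r * q^+2 - 4%:R * p^+2 * r^+2 * t + 9%:R * p^+2 * t * q^+3 - 266%:R * s * q * p^+2 * t + 16%:R * p * s^+3 + 146%:R * p * t * r * q^+2 - 18%:R * s * p * r^+2 * q + 290%:R * s * p * t * r - 275%:R * p * q * t^+2 + 12%:R * p * s^+2 * q^+2 + 4%:R * s * q^+3 * r - 195%:R * r^+2 * q * t + 260%:R * s * q^+2 * t + 27%:R * s * r^+3 + 375%:R * t^+2 * r - 36%:R * q^+4 * t - 48%:R * r * s^+2 * q - 400%:R * t * s^+2.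

Definition F1 (p q r s t d : C) : C := q + 4%:R * p * d + 10%:R * d ^+ 2.
Definition F2 (p q r s t d : C) : C :=
  r + 3%:R * q * d + 6%:R * p * d ^+ 2 + 10%:R * d ^+ 3.
Definition F3 (p q r s t d : C) : C :=
  p * q + 4%:R * p ^+ 2 * d - 24%:R * p * d ^+ 2 - 22%:R * q * d
  - 40%:R * d ^+ 3 - 9%:R * r.

End Quintic.

From HB Require Import structures.
From mathcomp Require Import all_boot all_order all_algebra all_field.
From mathcomp Require Import ring.
Import Order.TTheory GRing.Theory Num.Theory.
Local Open Scope ring_scope.
Set Implicit Arguments. Unset Strict Implicit. Unset Printing Implicit Defensive.

(* Since D = 0, f = (X - d)^2 (X - x)(X - y)(X - z).
   1. Vieta expresses p, ..., t through d and the elementary symmetric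
      functions e1, e2, e3 of x, y, z.  Polynomial identities then give
      L1 = 2 Disc, where Disc is the discriminant of the squarefree part
      (X - d)(X - x)(X - y)(X - z), and C0 = d L1.  So L1 > 0 yields
      d = C0 / L1 (hence d is real) and Disc > 0.
   2. Disc > 0 forces x, y, z to be real (a conjugate pair of roots would
      make Disc <= 0) and the four roots to be distinct; list the simple
      roots as a < b < c.
   3. F1, F2, F3 at d are e2, - e3 and - (e1 e2 - 9 e3) of the shifted roots
      a - d, b - d, c - d, and for three distinct nonzero reals the signs of
      e2, e3 and e1 e2 - 9 e3 determine the position of 0 among them. *)

Section SymmetricFunctions.
Variable R : comPzRingType.
Implicit Types u v w : R.

Definition esym1 u v w := u + v + w.
Definition esym2 u v w := u * v + u * w + v * w.
Definition esym3 u v w := u * v * w.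

(* The combination e1 e2 - 9 e3 whose sign, together with those of e2 and e3,
   locates 0 among three distinct reals. *)
Definition esym_mix u v w := esym1 u v w * esym2 u v w - 9%:R * esym3 u v w.

(* A weighted sum of squared gaps: positive when u, v, w are positive. *)
Lemma esym_mix_gaps u v w :
  esym_mix u v w = u * (w - v) ^+ 2 + v * (w - u) ^+ 2 + w * (v - u) ^+ 2.
Proof. by rewrite /esym_mix /esym1 /esym2 /esym3; ring. Qed.

(* Behaviour under u, v, w |-> - w, - v, - u, which reverses the order. *)
Lemma esym_opp u v w :
  [/\ esym2 (- w) (- v) (- u) = esym2 u v w,
      esym3 (- w) (- v) (- u) = - esym3 u v w &
      esym_mix (- w) (- v) (- u) = - esym_mix u v w].
Proof. by split; rewrite /esym_mix /esym1 /esym2 /esym3; ring. Qed.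

Lemma esym_rotate u v w :
  [/\ esym1 v w u = esym1 u v w, esym2 v w u = esym2 u v w & esym3 v w u = esym3 u v w].
Proof. by split; rewrite /esym1 /esym2 /esym3; ring. Qed.

End SymmetricFunctions.

Section SignPattern.
Variable R : numDomainType.
Implicit Types u v w : R.

Lemma esym_signs_pos u v w : 0 < u -> u < v -> v < w ->
  [/\ 0 < esym2 u v w, 0 < esym3 u v w & 0 < esym_mix u v w].
Proof.
move=> u0 uv vw; have v0 := lt_trans u0 uv; have w0 := lt_trans v0 vw.
rewrite esym_mix_gaps /esym2 /esym3; split; first by rewrite !addr_gt0 ?mulr_gt0.
  by rewrite !mulr_gt0.
by rewrite !addr_gt0 ?mulr_gt0 ?exprn_gt0 ?subr_gt0 // (lt_trans uv vw).
Qed.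

(* If only the smallest of the three numbers is negative, then e3 < 0, and
   e2 > 0 forces e1 > 0, hence e1 e2 - 9 e3 > 0. *)
Lemma esym_signs_one_neg u v w : u < 0 -> 0 < v -> v < w ->
  esym3 u v w < 0 /\ (0 < esym2 u v w -> 0 < esym_mix u v w).
Proof.
move=> u0 v0 vw; have w0 := lt_trans v0 vw; have vw0 : 0 < v + w by rewrite addr_gt0.
have e3_lt0 : esym3 u v w < 0 by rewrite /esym3 -mulrA pmulr_llt0 ?mulr_gt0.
split=> // e2_gt0.
have e1_gt0 : 0 < esym1 u v w.
  rewrite -(pmulr_lgt0 _ vw0).
  have -> : esym1 u v w * (v + w) = esym2 u v w + (v ^+ 2 + v * w + w ^+ 2).
    by rewrite /esym1 /esym2; ring.
  by rewrite addr_gt0 // !addr_gt0 ?mulr_gt0 ?exprn_gt0.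
by rewrite /esym_mix subr_gt0 (lt_trans _ (mulr_gt0 e1_gt0 e2_gt0)) // pmulr_rlt0 ?ltr0n.
Qed.

(* The two remaining configurations follow by the symmetry x |-> -x. *)
Lemma esym_signs_neg u v w : u < v -> v < w -> w < 0 ->
  [/\ 0 < esym2 u v w, esym3 u v w < 0 & esym_mix u v w < 0].
Proof.
move=> uv vw w0; have [] := @esym_signs_pos (-w) (-v) (-u).
- by rewrite oppr_gt0.
- by rewrite ltrN2.
- by rewrite ltrN2.
by case: (esym_opp u v w) => -> -> ->; rewrite !oppr_gt0.
Qed.

Lemma esym_signs_two_neg u v w : u < v -> v < 0 -> 0 < w ->
  0 < esym3 u v w /\ (0 < esym2 u v w -> esym_mix u v w < 0).
Proof.
move=> uv v0 w0; have [] := @esym_signs_one_neg (-w) (-v) (-u).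
- by rewrite oppr_lt0.
- by rewrite oppr_gt0.
- by rewrite ltrN2.
by case: (esym_opp u v w) => -> -> ->; rewrite !oppr_gt0 oppr_lt0.
Qed.

Lemma zero_position u v w : u \is Num.real -> v \is Num.real -> w \is Num.real ->
  u < v -> v < w -> u != 0 -> v != 0 -> w != 0 ->
  [\/ 0 < u, u < 0 /\ 0 < v, v < 0 /\ 0 < w | w < 0].
Proof.
move=> Ru Rv Rw uv vw u0 v0 w0.
case: (real_ltgt0P Rv) v0 => [v_gt0|v_lt0|] // _.
  by case: (real_ltgt0P Ru) u0 => [u_gt0|u_lt0|] // _; [constructor 1|constructor 2].
by case: (real_ltgt0P Rw) w0 => [w_gt0|w_lt0|] // _; [constructor 3|constructor 4].
Qed.

(* In each
   of the four positions the implication whose conclusion holds is immediate,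
   and the other three hypotheses contradict the sign facts proved above. *)
Lemma zero_position_from_signs u v w :
  u \is Num.real -> v \is Num.real -> w \is Num.real ->
  u < v -> v < w -> u != 0 -> v != 0 -> w != 0 ->
  let e2 := esym2 u v w in let e3 := esym3 u v w in let m := esym_mix u v w in
  [/\ (0 < e2 /\ 0 < e3 /\ 0 < m) -> 0 < u,
      (0 < e2 /\ e3 < 0 /\ m < 0) -> w < 0,
      (e3 < 0 /\ (e2 <= 0 \/ 0 <= m)) -> u < 0 /\ 0 < v &
      (0 < e3 /\ (e2 <= 0 \/ m <= 0)) -> v < 0 /\ 0 < w].
Proof.
move=> Ru Rv Rw uv vw u0 v0 w0 e2 e3 m.
case: (zero_position Ru Rv Rw uv vw u0 v0 w0) => [u_gt0|[u_lt0 v_gt0]|[v_lt0 w_gt0]|w_lt0].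
- have [e2_gt0 e3_gt0 m_gt0] := esym_signs_pos u_gt0 uv vw.
  split=> [_ //|[_ [/lt_nsym]]|[/lt_nsym]|[_ [|]]] //.
    by rewrite (lt_geF e2_gt0).
  by rewrite (lt_geF m_gt0).
- have [e3_lt0 m_pos] := esym_signs_one_neg u_lt0 v_gt0 vw.
  split=> [[_ [/lt_nsym]]|[/m_pos/lt_nsym _ [_]]|_ //|[/lt_nsym]] //.
- have [e3_gt0 m_neg] := esym_signs_two_neg uv v_lt0 w_gt0.
  split=> [[/m_neg/lt_nsym _ [_]]|[_ [/lt_nsym]]|[/lt_nsym]|_ //] //.
- have [e2_gt0 e3_lt0 m_lt0] := esym_signs_neg uv vw w_lt0.
  split=> [[_ [/lt_nsym]]|_ //|[_ [|]]|[/lt_nsym]] //.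
    by rewrite (lt_geF e2_gt0).
  by rewrite (lt_geF m_lt0).
Qed.

Lemma position_from_shifted_signs a b c d :
  a \is Num.real -> b \is Num.real -> c \is Num.real -> d \is Num.real ->
  a < b -> b < c -> d != a -> d != b -> d != c ->
  let f1 : R := esym2 (a - d) (b - d) (c - d) in
  let f2 : R := - esym3 (a - d) (b - d) (c - d) in
  let f3 : R := - esym_mix (a - d) (b - d) (c - d) in
  ((0 < f1 /\ f2 < 0 /\ f3 < 0) -> d < a) /\
  ((0 < f1 /\ 0 < f2 /\ 0 < f3) -> c < d) /\
  ((0 < f2 /\ (f1 <= 0 \/ f3 <= 0)) -> a < d /\ d < b) /\
  ((f2 < 0 /\ (f1 <= 0 \/ 0 <= f3)) -> b < d /\ d < c).
Proof.
move=> Ra Rb Rc Rd ab bc da db dc f1 f2 f3.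
have [] := @zero_position_from_signs (a - d) (b - d) (c - d).
- by rewrite rpredB.
- by rewrite rpredB.
- by rewrite rpredB.
- by rewrite ltrD2r.
- by rewrite ltrD2r.
- by rewrite subr_eq0 eq_sym.
- by rewrite subr_eq0 eq_sym.
- by rewrite subr_eq0 eq_sym.
rewrite /f1 /f2 /f3 !(oppr_lt0, oppr_gt0, oppr_le0, oppr_ge0).
by rewrite !(subr_gt0, subr_lt0).
Qed.

End SignPattern.

Section RealSorting.
Variable R : numDomainType.
Implicit Types x y z : R.

Lemma sort_distinct_reals x y z :
  x \is Num.real -> y \is Num.real -> z \is Num.real ->
  x != y -> x != z -> y != z ->
  exists a b c, [/\ a < b, b < c & perm_eq [:: a; b; c] [:: x; y; z]].
Proof.
move=> Rx Ry Rz xy xz yz; pose s := [:: x; y; z].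
have real_total : {in [pred u : R | u \is Num.real] &, total <=%R}.
  by move=> u v; exact: real_leVge.
have sorted_s : sorted <=%R (sort <=%R s).
  by apply: (sort_sorted_in real_total); apply/and4P.
have perm_s : perm_eq (sort <=%R s) s by rewrite perm_sort.
have uniq_s : uniq (sort <=%R s) by rewrite sort_uniq /= !inE negb_or xy xz yz.
have size_s : size (sort <=%R s) = 3%N by rewrite size_sort.
move: sorted_s uniq_s perm_s size_s; case: (sort _ s) => [|a [|b [|c []]]] //=.
rewrite !inE negb_or => /and3P[ab bc _] /and3P[/andP[a_neq_b _] b_neq_c _] perm_abc _.
by exists a, b, c; rewrite !lt_neqAle a_neq_b b_neq_c ab bc.
Qed.

End RealSorting.

Lemma prod_repeated_root (R : comNzRingType) n (alpha : 'I_n -> R) i j :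
  i != j -> alpha i = alpha j ->
  \prod_k ('X - (alpha k)%:P) =
    ('X - (alpha i)%:P) ^+ 2 * \prod_(k in ~: [set i; j]) ('X - (alpha k)%:P).
Proof.
move=> ij Eij; rewrite (bigD1 i) //= (bigD1 j) 1?eq_sym //= -Eij mulrA -expr2.
by congr (_ * _); apply: eq_bigl => k; rewrite in_setC in_set2 negb_or.
Qed.

Section DoubleRootQuintic.
Variable C : numClosedFieldType.
Implicit Types (p q r s t d x y z : C).

Lemma quintic_inj p q r s t p' q' r' s' t' :
  quintic p q r s t = quintic p' q' r' s' t' ->
  [/\ p = p', q = q', r = r', s = s' & t = t'].
Proof.
move=> E; have coefE k : (quintic p q r s t)`_k = (quintic p' q' r' s' t')`_k.
  by rewrite E.
move: (coefE 4%N) (coefE 3%N) (coefE 2%N) (coefE 1%N) (coefE 0%N).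
rewrite /quintic !coefD !coefZ !coefXn !coefX !coefC /=.
by rewrite !(mulr0, mulr1, addr0, add0r) => -> -> -> -> ->.
Qed.

Lemma double_root_coefs p q r s t d x y z :
  quintic p q r s t = ('X - d%:P) ^+ 2 * ('X - x%:P) * ('X - y%:P) * ('X - z%:P) ->
  let e1 := esym1 x y z in let e2 := esym2 x y z in let e3 := esym3 x y z in
  [/\ p = - (2%:R * d + e1), q = d ^+ 2 + 2%:R * d * e1 + e2,
      r = - (e3 + 2%:R * d * e2 + d ^+ 2 * e1), s = 2%:R * d * e3 + d ^+ 2 * e2
    & t = - (d ^+ 2 * e3)].
Proof.
move=> fac e1 e2 e3; apply: quintic_inj; rewrite fac /quintic /e1 /e2 /e3.
rewrite /esym1 /esym2 /esym3 -!mul_polyC !(rmorphD, rmorphN, rmorphM, rmorphXn, rmorph_nat) /=.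
ring.
Qed.

Definition sqfree_discr d x y z : C :=
  ((x - y) * (x - z) * (y - z)) ^+ 2 * ((d - x) * (d - y) * (d - z)) ^+ 2.

Local Ltac solve_real := repeat first
  [ assumption | apply: rpred_nat | apply: rpredD | apply: rpredB
  | apply: rpredM | apply: rpredX | rewrite rpredN ].

Lemma C0_real p q r s t :
  p \is Num.real -> q \is Num.real -> r \is Num.real ->
  s \is Num.real -> t \is Num.real -> C0 p q r s t \is Num.real.
Proof. by move=> *; rewrite /C0; solve_real. Qed.

Section Factored.
Variables (p q r s t d x y z : C).
Hypothesis fac :
  quintic p q r s t = ('X - d%:P) ^+ 2 * ('X - x%:P) * ('X - y%:P) * ('X - z%:P).

Lemma L1_double_root : L1 p q r s t = 2%:R * sqfree_discr d x y z.
Proof.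
case: (double_root_coefs fac) => -> -> -> -> ->.
by rewrite /L1 /sqfree_discr /esym1 /esym2 /esym3; ring.
Qed.

Lemma C0_double_root : C0 p q r s t = d * L1 p q r s t.
Proof.
case: (double_root_coefs fac) => -> -> -> -> ->.
by rewrite /C0 /L1 /esym1 /esym2 /esym3; ring.
Qed.

(* F1, F2, F3 at the double root are the symmetric functions of the shifted
   simple roots: f(y + d) = y^2 (y^3 + (p + 5d) y^2 + F1 y + F2). *)
Lemma F_double_root :
  [/\ F1 p q r s t d = esym2 (x - d) (y - d) (z - d),
      F2 p q r s t d = - esym3 (x - d) (y - d) (z - d) &
      F3 p q r s t d = - esym_mix (x - d) (y - d) (z - d)].
Proof.
case: (double_root_coefs fac) => -> -> -> _ _.
by split; rewrite /F1 /F2 /F3 /esym_mix /esym1 /esym2 /esym3; ring.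
Qed.

Lemma double_root_esym_real :
  p \is Num.real -> q \is Num.real -> r \is Num.real -> d \is Num.real ->
  [/\ esym1 x y z \is Num.real, esym2 x y z \is Num.real & esym3 x y z \is Num.real].
Proof.
case: (double_root_coefs fac) => pE qE rE _ _ Rp Rq Rr Rd.
have R1 : esym1 x y z \is Num.real.
  have -> : esym1 x y z = - p - 2%:R * d by rewrite pE; ring.
  by solve_real.
have R2 : esym2 x y z \is Num.real.
  have -> : esym2 x y z = q - d ^+ 2 - 2%:R * d * esym1 x y z by rewrite qE; ring.
  by solve_real.
have R3 : esym3 x y z \is Num.real.
  have -> : esym3 x y z = - r - 2%:R * d * esym2 x y z - d ^+ 2 * esym1 x y z.
    by rewrite rE; ring.
  by solve_real.
by split.
Qed.

End Factored.

Lemma conj_root_real_cubic x y z :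
  esym1 x y z \is Num.real -> esym2 x y z \is Num.real -> esym3 x y z \is Num.real ->
  (x^* - x) * (x^* - y) * (x^* - z) = 0.
Proof.
move=> R1 R2 R3.
have cubicE u : (u - x) * (u - y) * (u - z) =
    u ^+ 3 - esym1 x y z * u ^+ 2 + esym2 x y z * u - esym3 x y z.
  by rewrite /esym1 /esym2 /esym3; ring.
have : ((x - x) * (x - y) * (x - z))^* = 0 by rewrite subrr !mul0r rmorph0.
rewrite !cubicE; move: (esym1 x y z) (esym2 x y z) (esym3 x y z) R1 R2 R3.
move=> e1 e2 e3 /conj_Creal R1 /conj_Creal R2 /conj_Creal R3.
by rewrite !(rmorphB, rmorphD, rmorphXn, rmorphM) /= R1 R2 R3.
Qed.

Lemma sqfree_discr_conj_pair x z d : z \is Num.real -> d \is Num.real ->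
  sqfree_discr d x x^* z <= 0.
Proof.
move=> Rz Rd.
have -> : sqfree_discr d x x^* z =
    - (`|x - x^*| ^+ 2 * (`|x - z| ^+ 2) ^+ 2 * (`|d - x| ^+ 2) ^+ 2 * `|d - z| ^+ 2).
  rewrite !normCK !rmorphB /= conjCK (conj_Creal Rz) (conj_Creal Rd) /sqfree_discr.
  ring.
by rewrite oppr_le0 !mulr_ge0 ?exprn_ge0.
Qed.

Lemma real_root_of_sqfree_discr_gt0 x y z d :
  esym1 x y z \is Num.real -> esym2 x y z \is Num.real -> esym3 x y z \is Num.real ->
  d \is Num.real -> 0 < sqfree_discr d x y z -> x \is Num.real.
Proof.
move=> R1 R2 R3 Rd disc_gt0.
have Rxx : x + x^* \is Num.real by rewrite CrealE rmorphD /= conjCK addrC.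
have other_real u : esym1 x y z = x + x^* + u -> u \is Num.real.
  by move=> E; rewrite (_ : u = esym1 x y z - (x + x^*)) ?rpredB // E; ring.
move/eqP: (conj_root_real_cubic R1 R2 R3); rewrite !mulf_eq0 !subr_eq0.
case/orP=> [/orP[/eqP/CrealP //|/eqP xy]|/eqP xz].
- have Rz : z \is Num.real by apply: other_real; rewrite /esym1 xy.
  by move: (sqfree_discr_conj_pair x Rz Rd); rewrite xy (lt_geF disc_gt0).
- have Ry : y \is Num.real by apply: other_real; rewrite /esym1 xz; ring.
  have swap_yz : sqfree_discr d x y z = sqfree_discr d x z y by rewrite /sqfree_discr; ring.
  rewrite swap_yz in disc_gt0.
  by move: (sqfree_discr_conj_pair x Ry Rd); rewrite xz (lt_geF disc_gt0).
Qed.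

Lemma sqfree_discr_rotate d x y z : sqfree_discr d y z x = sqfree_discr d x y z.
Proof. by rewrite /sqfree_discr; ring. Qed.

Lemma roots_real_of_sqfree_discr_gt0 x y z d :
  esym1 x y z \is Num.real -> esym2 x y z \is Num.real -> esym3 x y z \is Num.real ->
  d \is Num.real -> 0 < sqfree_discr d x y z ->
  [/\ x \is Num.real, y \is Num.real & z \is Num.real].
Proof.
move=> R1 R2 R3 Rd disc_gt0.
have [E1 E2 E3] := esym_rotate x y z; have [E1' E2' E3'] := esym_rotate y z x.
split; first exact: real_root_of_sqfree_discr_gt0 disc_gt0.
  apply: (@real_root_of_sqfree_discr_gt0 y z x d); rewrite ?E1 ?E2 ?E3 //.
  by rewrite sqfree_discr_rotate.
apply: (@real_root_of_sqfree_discr_gt0 z x y d); rewrite ?E1' ?E2' ?E3' ?E1 ?E2 ?E3 //.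
by rewrite sqfree_discr_rotate sqfree_discr_rotate.
Qed.

Lemma sqfree_discr_neq0 d x y z : sqfree_discr d x y z != 0 ->
  [/\ x != y, x != z & y != z] /\ [/\ d != x, d != y & d != z].
Proof.
move=> disc_neq0; do 2 split; apply: contraNneq disc_neq0 => ->.
all: by apply/eqP; rewrite /sqfree_discr; ring.
Qed.

Lemma discr5_eq0_double_root (alpha : 'I_5 -> C) : discr5 alpha = 0 ->
  exists d x y z, \prod_(i < 5) ('X - (alpha i)%:P) =
    ('X - d%:P) ^+ 2 * ('X - x%:P) * ('X - y%:P) * ('X - z%:P).
Proof.
move/eqP; rewrite /discr5 => /prodf_eq0[i _] /prodf_eq0[j ij].
rewrite expf_eq0 /= subr_eq0 => /eqP Eij.
have i_neq_j : i != j by rewrite neq_ltn ij.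
rewrite (prod_repeated_root i_neq_j Eij) -big_enum /=.
have : #|~: [set i; j]| = 3%N.
  have := cardsC [set i; j]; rewrite cards2 i_neq_j card_ord.
  by move/(congr1 (subn^~ 2%N)); rewrite addKn.
rewrite cardE; case: (enum _) => [|k1 [|k2 [|k3 []]]] // _.
exists (alpha i), (alpha k1), (alpha k2), (alpha k3).
by rewrite !big_cons big_nil mulr1 !mulrA.
Qed.

Lemma sorted_double_root_factorization (P : {poly C}) d x y z :
  P = ('X - d%:P) ^+ 2 * ('X - x%:P) * ('X - y%:P) * ('X - z%:P) ->
  x \is Num.real -> y \is Num.real -> z \is Num.real ->
  [/\ x != y, x != z & y != z] -> [/\ d != x, d != y & d != z] ->
  exists a b c, [/\ a \is Num.real, b \is Num.real & c \is Num.real] /\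
    [/\ a < b, b < c, d != a, d != b & d != c] /\
    P = ('X - d%:P) ^+ 2 * ('X - a%:P) * ('X - b%:P) * ('X - c%:P).
Proof.
move=> fac Rx Ry Rz [xy xz yz] [dx dy dz].
have [a [b [c [ab bc perm_abc]]]] := sort_distinct_reals Rx Ry Rz xy xz yz.
have /and4P[Ra Rb Rc _] : all [pred u | u \is Num.real] [:: a; b; c].
  by rewrite (perm_all _ perm_abc); apply/and4P.
have /and4P[da db dc _] : all [pred u | d != u] [:: a; b; c].
  by rewrite (perm_all _ perm_abc); apply/and4P.
exists a, b, c; split; first by split.
split; first by split.
have : \prod_(u <- [:: a; b; c]) ('X - u%:P) = \prod_(u <- [:: x; y; z]) ('X - u%:P).
  exact: perm_big.
rewrite !big_cons !big_nil !mulr1 => prodE.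
by rewrite fac -!mulrA prodE.
Qed.

End DoubleRootQuintic.

Theorem mainTheorem8 (C : numClosedFieldType) (p q r s t : C)
  (alpha : 'I_5 -> C) :
  p \is Num.real -> q \is Num.real -> r \is Num.real ->
  s \is Num.real -> t \is Num.real ->
  quintic p q r s t = \prod_(i < 5) ('X - (alpha i)%:P) ->
  discr5 alpha = 0 ->
  0 < L1 p q r s t ->
  let d := C0 p q r s t / L1 p q r s t in
  let f1 := F1 p q r s t d in
  let f2 := F2 p q r s t d in
  let f3 := F3 p q r s t d in
  exists a b c : C,
    [/\ a \is Num.real, b \is Num.real, c \is Num.real & d \is Num.real] /\
    [/\ a < b, b < c, d != a, d != b & d != c] /\
    quintic p q r s t = ('X - d%:P) ^+ 2 * ('X - a%:P) * ('X - b%:P) * ('X - c%:P) /\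
    ((0 < f1 /\ f2 < 0 /\ f3 < 0) -> d < a) /\
    ((0 < f1 /\ 0 < f2 /\ 0 < f3) -> c < d) /\
    ((0 < f2 /\ (f1 <= 0 \/ f3 <= 0)) -> a < d /\ d < b) /\
    ((f2 < 0 /\ (f1 <= 0 \/ 0 <= f3)) -> b < d /\ d < c).
Proof.
move=> Rp Rq Rr Rs Rt f_prod discr_eq0 L1_gt0 d f1 f2 f3.
have [d0 [x [y [z fac]]]] := discr5_eq0_double_root discr_eq0.
rewrite {}fac in f_prod.
have d0E : d0 = d by rewrite /d (C0_double_root f_prod) mulfK // lt0r_neq0.
rewrite {d0}d0E in f_prod.
have Rd : d \is Num.real by rewrite /d rpredM // ?C0_real // rpredV gtr0_real.
have [R1 R2 R3] := double_root_esym_real f_prod Rp Rq Rr Rd.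
have disc_gt0 : 0 < sqfree_discr d x y z.
  by rewrite -(pmulr_rgt0 _ (ltr0n C 2)) -(L1_double_root f_prod).
have [Rx Ry Rz] := roots_real_of_sqfree_discr_gt0 R1 R2 R3 Rd disc_gt0.
have [distinct_xyz distinct_d] := sqfree_discr_neq0 (lt0r_neq0 disc_gt0).
have [a [b [c [[Ra Rb Rc] [[ab bc da db dc] f_sorted]]]]] :=
  sorted_double_root_factorization f_prod Rx Ry Rz distinct_xyz distinct_d.
have [F1E F2E F3E] := F_double_root f_sorted.
exists a, b, c; do 3!split => //.
by rewrite /f1 /f2 /f3 F1E F2E F3E; exact: position_from_shifted_signs.
Qed.
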